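(* $\mathbb F_0=\mathbb F_{\sqrt{1+x^2}}$.
   Context: An origami pair is a pair $(\mathcal P,\mathcal L)$ where $\mathcal P\subset\mathbb R^2$ is a set of points and $\mathcal L$ is a collection of lines in $\mathbb R^2$ such that: (i) the intersection point of any two non-parallel lines of $\mathcal L$ lies in $\mathcal P$; (ii) for any two distinct points of $\mathcal P$, the line through them is in $\mathcal L$; (iii) for any two distinct points of $\mathcal P$, the perpendicular bisector of the segment joining them is in $\mathcal L$; (iv) if $L_1,L_2\in\mathcal L$, then every line equidistant from $L_1$ and $L_2$ is in $\mathcal L$ (the midline if they are parallel, the angle bisectors if they intersect); (v) if $L_1,L_2\in\mathcal L$, then the mirror reflection of $L_2$ across $L_1$ is in $\mathcal L$. A set $\mathcal P\subset\mathbb R^2$ is closed under origami constructions if there is a collection of lines $\mathcal L$ with $(\mathcal P,\mathcal L)$ an origami pair. The set of origami constructible points is $\mathcal P_0=\bigcap\{\mathcal P : (0,0),(0,1)\in\mathcal P \text{ and } \mathcal P \text{ is closed under origami constructions}\}$. The set of origami numbers is $\mathbb F_0=\{\alpha\in\mathbb R : \exists v_1,v_2\in\mathcal P_0,\ |\alpha|=\operatorname{dist}(v_1,v_2)\}$. $\mathbb F_{\sqrt{1+x^2}}$ denotes the smallest subfield of $\mathbb C$ that, together with any element $x$, contains a square root of $1+x^2$ (equivalently both square roots, since fields are closed under negation). *)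

From Stdlib Require Import Reals.
From Coquelicot Require Import Coquelicot.
Open Scope R_scope.

Definition point := (R * R)%type.

Definition pdist (p q : point) : R :=
  sqrt ((fst p - fst q)^2 + (snd p - snd q)^2).

Definition is_line (L : point -> Prop) : Prop :=
  exists a b c : R, (a <> 0 \/ b <> 0) /\
    forall p : point, L p <-> a * fst p + b * snd p = c.

Definition same_set (X Y : point -> Prop) : Prop := forall p, X p <-> Y p.

Definition parallel (L1 L2 : point -> Prop) : Prop :=
  same_set L1 L2 \/ ~ (exists p, L1 p /\ L2 p).

Definition line_through (u v : point) : point -> Prop :=
  fun p => (fst p - fst u) * (snd v - snd u) - (snd p - snd u) * (fst v - fst u) = 0.

Definition perp_bisector (u v : point) : point -> Prop :=
  fun p => pdist p u = pdist p v.

Definition dist_to_line (p : point) (L : point -> Prop) (d : R) : Prop :=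
  (exists q, L q /\ pdist p q = d) /\ (forall q, L q -> d <= pdist p q).

(* This gives the midline when
   L1, L2 are parallel and the two angle bisectors when they intersect. *)
Definition equidistant_line (L1 L2 M : point -> Prop) : Prop :=
  is_line M /\ ~ same_set L1 L2 /\
  forall p, M p -> exists d, dist_to_line p L1 d /\ dist_to_line p L2 d.

Definition reflect_pt (L : point -> Prop) (p q : point) : Prop :=
  (L p /\ q = p) \/ (p <> q /\ same_set L (perp_bisector p q)).

Definition reflect_line (L1 L2 : point -> Prop) : point -> Prop :=
  fun q => exists p, L2 p /\ reflect_pt L1 p q.

Definition in_coll (LL : (point -> Prop) -> Prop) (X : point -> Prop) : Prop :=
  exists M, LL M /\ same_set M X.

Definition origami_pair (P : point -> Prop) (LL : (point -> Prop) -> Prop) : Prop :=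
  (forall L, LL L -> is_line L) /\
  (forall L1 L2 p, LL L1 -> LL L2 -> ~ parallel L1 L2 -> L1 p -> L2 p -> P p) /\
  (forall u v, P u -> P v -> u <> v -> in_coll LL (line_through u v)) /\
  (forall u v, P u -> P v -> u <> v -> in_coll LL (perp_bisector u v)) /\
  (forall L1 L2 M, LL L1 -> LL L2 -> equidistant_line L1 L2 M -> in_coll LL M) /\
  (forall L1 L2, LL L1 -> LL L2 -> in_coll LL (reflect_line L1 L2)).

Definition closed_origami (P : point -> Prop) : Prop :=
  exists LL, origami_pair P LL.

Definition P0 (p : point) : Prop :=
  forall P : point -> Prop, P (0, 0) -> P (0, 1) -> closed_origami P -> P p.

Definition F0 (a : R) : Prop :=
  exists v1 v2, P0 v1 /\ P0 v2 /\ Rabs a = pdist v1 v2.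

Definition subfieldC (S : C -> Prop) : Prop :=
  S (RtoC 0) /\ S (RtoC 1) /\
  (forall x y, S x -> S y -> S (Cplus x y)) /\
  (forall x, S x -> S (Copp x)) /\
  (forall x y, S x -> S y -> S (Cmult x y)) /\
  (forall x, S x -> x <> RtoC 0 -> S (Cinv x)).

Definition F_sqrt1x2 (z : C) : Prop :=
  forall S : C -> Prop, subfieldC S ->
    (forall x, S x -> exists y, S y /\ Cmult y y = Cplus (RtoC 1) (Cmult x x)) ->
    S z.

From Stdlib Require Import Reals Lra Psatz Classical.
From Coquelicot Require Import Coquelicot.
Open Scope R_scope.

(* Both inclusions are closure arguments.  Let K be the set of reals in F_sqrt(1+x^2).
   Points with coordinates in K and lines a x + b y = c with a, b, c in K form an origami
   pair: intersections, lines through two points, perpendicular bisectors and reflections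
   have coefficients rational in the data, and the two angle bisectors of two such lines are
   r2 (a1 x + b1 y - c1) = +- r1 (a2 x + b2 y - c2) with r = sqrt (a^2 + b^2), which lies in K
   because it equals |a| sqrt (1 + (b/a)^2).  Hence every origami number lies in K.
   Conversely, in any origami pair containing (0,0) and (0,1) the abscissae c of the
   vertical lines x = c in the collection form a field (sums from midpoints and reflections,
   quotients from the lines y = a x and y = - a x), and it is closed under
   t |-> sqrt (1 + t^2): the bisector of y = 0 and y = t x meets y = t at x = 1 + sqrt (1 + t^2). *)

Definition affine (a b c : R) (p : point) : R := a * fst p + b * snd p - c.
Definition line_eq (a b c : R) : point -> Prop := fun p => affine a b c p = 0.
Definition nonzero_pair (a b : R) : Prop := a <> 0 \/ b <> 0.

Lemma Rmult_eq_0_cancel_l k x : k <> 0 -> k * x = 0 -> x = 0.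
Proof. intros Hk H. destruct (Rmult_integral _ _ H); [contradiction | assumption]. Qed.

Lemma nonzero_pair_sumsq_pos a b : nonzero_pair a b -> 0 < a * a + b * b.
Proof. intros [H | H]; pose proof (Rsqr_pos_lt _ H); unfold Rsqr in *; nra. Qed.

Lemma point_neq_coord (u v : point) : u <> v -> fst u <> fst v \/ snd u <> snd v.
Proof.
  destruct u as [x y], v as [x' y']; simpl; intro H.
  destruct (Req_dec x x') as [<- | Hx]; [right | left]; congruence.
Qed.

Lemma pair_neq_fst (x x' y y' : R) : x <> x' -> (x, y) <> (x', y').
Proof. congruence. Qed.

Lemma pair_neq_snd (x x' y y' : R) : y <> y' -> (x, y) <> (x', y').
Proof. congruence. Qed.

Lemma same_set_sym X Y : same_set X Y -> same_set Y X.
Proof. intros H p; specialize (H p); tauto. Qed.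

Lemma same_set_trans X Y Z : same_set X Y -> same_set Y Z -> same_set X Z.
Proof. intros H1 H2 p; specialize (H1 p); specialize (H2 p); tauto. Qed.

Lemma in_coll_same_set LL X Y : in_coll LL X -> same_set X Y -> in_coll LL Y.
Proof. intros [M [HM E]] E'. exists M; split; [exact HM | exact (same_set_trans _ _ _ E E')]. Qed.

Lemma in_coll_line_eq_congr LL a b c a' b' c' :
  in_coll LL (line_eq a b c) -> a = a' -> b = b' -> c = c' -> in_coll LL (line_eq a' b' c').
Proof. intros H -> -> ->; exact H. Qed.

Lemma line_eq_is_line a b c : nonzero_pair a b -> is_line (line_eq a b c).
Proof. intro H. exists a, b, c. split; [exact H |]. intro p; unfold line_eq, affine; lra. Qed.

Lemma line_eq_inhabited a b c : nonzero_pair a b -> exists p, line_eq a b c p.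
Proof.
  intro H. pose proof (nonzero_pair_sumsq_pos _ _ H).
  exists (c * a / (a * a + b * b), c * b / (a * a + b * b)).
  unfold line_eq, affine; simpl. field. lra.
Qed.

Lemma line_eq_translate a b c p t :
  line_eq a b c p -> line_eq a b c (fst p - t * b, snd p + t * a).
Proof. unfold line_eq, affine; simpl; intro H; rewrite <- H; ring. Qed.

Lemma line_eq_affine_comb a b c p q t : line_eq a b c p -> line_eq a b c q ->
  line_eq a b c (fst p + t * (fst q - fst p), snd p + t * (snd q - snd p)).
Proof.
  unfold line_eq, affine; simpl; intros Hp Hq.
  transitivity ((1 - t) * (a * fst p + b * snd p - c) + t * (a * fst q + b * snd q - c));
    [ring | rewrite Hp, Hq; ring].
Qed.

Lemma line_eq_proportional a b c a' b' c' r k : r <> 0 -> k <> 0 ->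
  (forall p, r * affine a b c p = k * affine a' b' c' p) ->
  same_set (line_eq a b c) (line_eq a' b' c').
Proof.
  intros Hr Hk H p; unfold line_eq; specialize (H p); split; intro E; rewrite E in H.
  - apply (Rmult_eq_0_cancel_l k); [exact Hk | lra].
  - apply (Rmult_eq_0_cancel_l r); [exact Hr | lra].
Qed.

Lemma line_eq_scale a b c k : k <> 0 -> same_set (line_eq a b c) (line_eq (k * a) (k * b) (k * c)).
Proof.
  intro Hk. apply (line_eq_proportional _ _ _ _ _ _ k 1); [exact Hk | lra |].
  intro p; unfold affine; ring.
Qed.

Lemma dot_zero_of_parallel a b A B dx dy :
  nonzero_pair A B -> A * b = B * a -> A * dx + B * dy = 0 -> a * dx + b * dy = 0.
Proof.
  intros [HA | HB] E H.
  - apply (Rmult_eq_0_cancel_l A); [exact HA |].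
    transitivity (a * (A * dx + B * dy) + dy * (A * b - B * a)); [ring | rewrite H, E; ring].
  - apply (Rmult_eq_0_cancel_l B); [exact HB |].
    transitivity (b * (A * dx + B * dy) - dx * (A * b - B * a)); [ring | rewrite H, E; ring].
Qed.

Lemma line_eq_same_of_parallel a b c A B C p : nonzero_pair a b -> nonzero_pair A B ->
  A * b = B * a -> line_eq a b c p -> line_eq A B C p -> same_set (line_eq a b c) (line_eq A B C).
Proof.
  unfold line_eq, affine; intros Hab HAB E Hp HP q; split; intro Hq.
  - assert (a * (fst q - fst p) + b * (snd q - snd p) = 0) by lra.
    assert (A * (fst q - fst p) + B * (snd q - snd p) = 0)
      by (apply (dot_zero_of_parallel A B a b); [exact Hab | lra | assumption]).
    lra.
  - assert (A * (fst q - fst p) + B * (snd q - snd p) = 0) by lra.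
    assert (a * (fst q - fst p) + b * (snd q - snd p) = 0)
      by (apply (dot_zero_of_parallel a b A B); assumption).
    lra.
Qed.

Lemma line_eq_parallel_of_subset a b c A B C : nonzero_pair a b ->
  (forall p, line_eq a b c p -> line_eq A B C p) -> A * b = B * a.
Proof.
  intros Hab Hs. destruct (line_eq_inhabited a b c Hab) as [p Hp].
  pose proof (Hs _ Hp) as H0. pose proof (Hs _ (line_eq_translate _ _ _ _ 1 Hp)) as H1.
  unfold line_eq, affine in *; simpl in *. lra.
Qed.

Lemma line_eq_same_of_subset a b c A B C : nonzero_pair a b -> nonzero_pair A B ->
  (forall p, line_eq a b c p -> line_eq A B C p) -> same_set (line_eq a b c) (line_eq A B C).
Proof.
  intros Hab HAB Hs. destruct (line_eq_inhabited a b c Hab) as [p Hp].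
  exact (line_eq_same_of_parallel _ _ _ _ _ _ p Hab HAB
           (line_eq_parallel_of_subset _ _ _ _ _ _ Hab Hs) Hp (Hs _ Hp)).
Qed.

Lemma line_through_line_eq u v : same_set (line_through u v)
  (line_eq (snd v - snd u) (- (fst v - fst u)) ((snd v - snd u) * fst u - (fst v - fst u) * snd u)).
Proof. intro p. unfold line_through, line_eq, affine. split; intro; lra. Qed.

Lemma perp_bisector_line_eq u v : same_set (perp_bisector u v)
  (line_eq (2 * (fst v - fst u)) (2 * (snd v - snd u)) (fst v ^ 2 + snd v ^ 2 - fst u ^ 2 - snd u ^ 2)).
Proof.
  intro p. unfold perp_bisector, pdist, line_eq, affine. split; intro H.
  - apply sqrt_inj in H; [lra | apply Rplus_le_le_0_compat; apply pow2_ge_0 ..].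
  - f_equal. lra.
Qed.

Lemma dist_to_line_same_set p L M d : dist_to_line p L d -> same_set L M -> dist_to_line p M d.
Proof.
  intros [[q [Hq Hd]] Hmin] E. split.
  - exists q; split; [apply E |]; assumption.
  - intros q' Hq'; apply Hmin, E, Hq'.
Qed.

Lemma dist_to_line_unique p L d d' : dist_to_line p L d -> dist_to_line p L d' -> d = d'.
Proof.
  intros [[q [Hq Hd]] Hmin] [[q' [Hq' Hd']] Hmin'].
  pose proof (Hmin _ Hq'). pose proof (Hmin' _ Hq). lra.
Qed.

Lemma dist_to_line_eq p a b c : nonzero_pair a b ->
  dist_to_line p (line_eq a b c) (Rabs (affine a b c p) / sqrt (a * a + b * b)).
Proof.
  intro Hab. pose proof (nonzero_pair_sumsq_pos _ _ Hab) as Hn.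
  set (n := a * a + b * b). set (l := affine a b c p).
  replace (Rabs l / sqrt n) with (sqrt (l * l / n))
    by (rewrite sqrt_div_alt by exact Hn; rewrite <- sqrt_Rsqr_abs; reflexivity).
  split.
  - (* the foot of the perpendicular from p *)
    exists (fst p - l / n * a, snd p - l / n * b). split.
    + unfold line_eq, l, affine, n; simpl. field; lra.
    + unfold pdist; simpl. f_equal. unfold n; field; lra.
  - intros q Hq. unfold pdist. apply sqrt_le_1_alt.
    assert (El : l = a * (fst p - fst q) + b * (snd p - snd q))
      by (unfold line_eq, affine in Hq; unfold l, affine; lra).
    apply (Rmult_le_reg_r n); [exact Hn |].
    unfold Rdiv; rewrite Rmult_assoc, Rinv_l, Rmult_1_r by (unfold n; lra).
    rewrite El; unfold n.
    pose proof (pow2_ge_0 (a * (snd p - snd q) - b * (fst p - fst q))). nra.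
Qed.

Definition mirror (a b c : R) (p : point) : point :=
  (fst p - 2 * affine a b c p / (a * a + b * b) * a,
   snd p - 2 * affine a b c p / (a * a + b * b) * b).

Lemma mirror_involutive a b c p : nonzero_pair a b -> mirror a b c (mirror a b c p) = p.
Proof.
  intro H. pose proof (nonzero_pair_sumsq_pos _ _ H).
  apply injective_projections; unfold mirror, affine; simpl; field; lra.
Qed.

Lemma vector_of_dot_cross a b dx dy :
  0 < a * a + b * b ->
  dx = (a * (a * dx + b * dy) + b * (b * dx - a * dy)) / (a * a + b * b) /\
  dy = (b * (a * dx + b * dy) - a * (b * dx - a * dy)) / (a * a + b * b).
Proof. intro Hn. split; field; lra. Qed.

Lemma reflect_pt_mirror L a b c p q : nonzero_pair a b -> same_set L (line_eq a b c) ->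
  reflect_pt L p q -> q = mirror a b c p.
Proof.
  intros Hab E [[Hp ->] | [Hpq Eb]].
  - apply E in Hp. unfold line_eq in Hp.
    apply injective_projections; unfold mirror; simpl; rewrite Hp; field;
      apply Rgt_not_eq, nonzero_pair_sumsq_pos, Hab.
  - assert (Eb' : same_set (line_eq a b c) (line_eq (2 * (fst q - fst p)) (2 * (snd q - snd p))
                    (fst q ^ 2 + snd q ^ 2 - fst p ^ 2 - snd p ^ 2))).
    { eapply same_set_trans; [apply same_set_sym, E |].
      eapply same_set_trans; [exact Eb | apply perp_bisector_line_eq]. }
    assert (Cross : b * (fst q - fst p) - a * (snd q - snd p) = 0).
    { pose proof (line_eq_parallel_of_subset _ _ _ _ _ _ Hab (fun x => proj1 (Eb' x))). lra. }
    assert (Dot : a * (fst q - fst p) + b * (snd q - snd p) = - 2 * affine a b c p).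
    { assert (Hm : line_eq a b c ((fst p + fst q) / 2, (snd p + snd q) / 2)).
      { apply Eb'. unfold line_eq, affine; simpl. field. }
      unfold line_eq, affine in *; simpl in Hm. lra. }
    destruct (vector_of_dot_cross a b (fst q - fst p) (snd q - snd p)
                (nonzero_pair_sumsq_pos _ _ Hab)) as [Ex Ey].
    rewrite Dot, Cross in Ex, Ey.
    apply injective_projections; unfold mirror; simpl; lra.
Qed.

Lemma mirror_reflect_pt L a b c p : nonzero_pair a b -> same_set L (line_eq a b c) ->
  reflect_pt L p (mirror a b c p).
Proof.
  intros Hab E. pose proof (nonzero_pair_sumsq_pos _ _ Hab) as Hn.
  set (t := 2 * affine a b c p / (a * a + b * b)).
  destruct (Req_dec (affine a b c p) 0) as [Hl | Hl].
  - left. split; [apply E, Hl |].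
    apply injective_projections; unfold mirror; simpl; rewrite Hl; field; lra.
  - right. assert (Ht : t <> 0).
    { unfold t. intro H0. apply Hl.
      apply (Rmult_eq_0_cancel_l (2 / (a * a + b * b))); [| rewrite <- H0; field; lra].
      apply Rgt_not_eq, Rdiv_lt_0_compat; lra. }
    split.
    + intro H. apply (f_equal fst) in H as H1. apply (f_equal snd) in H as H2.
      unfold mirror in H1, H2; simpl in H1, H2; fold t in H1, H2.
      destruct Hab as [Ha | Hb]; [apply Ha | apply Hb];
        apply (Rmult_eq_0_cancel_l t); lra.
    + eapply same_set_trans; [exact E |].
      eapply same_set_trans; [| apply same_set_sym, perp_bisector_line_eq].
      unfold mirror; simpl; fold t.
      eapply same_set_trans; [apply (line_eq_scale _ _ _ (- 2 * t)); lra |].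
      apply line_eq_proportional with (r := 1) (k := 1); [lra | lra |].
      intro x. unfold t, affine; simpl. field. lra.
Qed.

Lemma reflect_line_line_eq L1 L2 a b c a' b' c' : nonzero_pair a b ->
  same_set L1 (line_eq a b c) -> same_set L2 (line_eq a' b' c') ->
  same_set (reflect_line L1 L2)
    (line_eq (a' - 2 * (a * a' + b * b') / (a * a + b * b) * a)
             (b' - 2 * (a * a' + b * b') / (a * a + b * b) * b)
             (c' - 2 * (a * a' + b * b') / (a * a + b * b) * c)).
Proof.
  intros Hab E1 E2. pose proof (nonzero_pair_sumsq_pos _ _ Hab).
  intro q. unfold reflect_line. split.
  - intros [p [Hp Hr]]. rewrite (reflect_pt_mirror _ _ _ _ _ _ Hab E1 Hr).
    apply E2 in Hp. unfold line_eq, mirror, affine in *; simpl in *.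
    rewrite <- Hp. field. lra.
  - intro Hq. exists (mirror a b c q). split.
    + apply E2. unfold line_eq, mirror, affine in *; simpl in *.
      rewrite <- Hq. field. lra.
    + rewrite <- (mirror_involutive a b c q Hab) at 2. apply mirror_reflect_pt; assumption.
Qed.

Lemma mirror_normal_nonzero a b a' b' : nonzero_pair a b -> nonzero_pair a' b' ->
  nonzero_pair (a' - 2 * (a * a' + b * b') / (a * a + b * b) * a)
               (b' - 2 * (a * a' + b * b') / (a * a + b * b) * b).
Proof.
  intros H H'. pose proof (nonzero_pair_sumsq_pos _ _ H). pose proof (nonzero_pair_sumsq_pos _ _ H').
  set (A := a' - 2 * (a * a' + b * b') / (a * a + b * b) * a).
  set (B := b' - 2 * (a * a' + b * b') / (a * a + b * b) * b).
  (* reflection preserves the length of the normal vector *)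
  assert (E : A * A + B * B = a' * a' + b' * b') by (unfold A, B; field; lra).
  destruct (Req_dec A 0) as [HA | HA]; [| left; exact HA].
  destruct (Req_dec B 0) as [HB | HB]; [| right; exact HB].
  rewrite HA, HB in E. lra.
Qed.

Definition sqrt1x2_closed (S : C -> Prop) : Prop :=
  forall x, S x -> exists y, S y /\ Cmult y y = Cplus (RtoC 1) (Cmult x x).

Lemma subfieldC_sqrt1x2_real S x : subfieldC S -> sqrt1x2_closed S ->
  S (RtoC x) -> S (RtoC (sqrt (1 + x * x))).
Proof.
  intros (_ & _ & _ & Sopp & _) Ssqrt Sx.
  destruct (Ssqrt _ Sx) as [[u v] [Sy E]].
  unfold Cmult, Cplus, RtoC in E; simpl in E. injection E as Ere Eim.
  (* a square root of the positive real 1 + x^2 is real *)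
  assert (Hv : v = 0).
  { destruct (Req_dec u 0) as [-> | Hu]; [nra |].
    apply (Rmult_eq_0_cancel_l (2 * u)); lra. }
  subst v.
  destruct (Rle_or_lt 0 u) as [Hu | Hu].
  - replace (sqrt (1 + x * x)) with u; [exact Sy |].
    symmetry. apply sqrt_lem_1; [nra | exact Hu | lra].
  - replace (RtoC (sqrt (1 + x * x))) with (Copp (u, 0)); [exact (Sopp _ Sy) |].
    apply injective_projections; simpl; [| ring].
    symmetry. apply sqrt_lem_1; [nra | lra | lra].
Qed.

Definition Fsqrt_real (r : R) : Prop := F_sqrt1x2 (RtoC r).

Lemma Fsqrt_real_0 : Fsqrt_real 0.
Proof. intros S HS _. apply HS. Qed.

Lemma Fsqrt_real_1 : Fsqrt_real 1.
Proof. intros S HS _. apply HS. Qed.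

Lemma Fsqrt_real_add x y : Fsqrt_real x -> Fsqrt_real y -> Fsqrt_real (x + y).
Proof. intros Hx Hy S HS Hq. rewrite RtoC_plus. apply HS; [apply Hx | apply Hy]; assumption. Qed.

Lemma Fsqrt_real_opp x : Fsqrt_real x -> Fsqrt_real (- x).
Proof. intros Hx S HS Hq. rewrite RtoC_opp. apply HS, Hx; assumption. Qed.

Lemma Fsqrt_real_mul x y : Fsqrt_real x -> Fsqrt_real y -> Fsqrt_real (x * y).
Proof. intros Hx Hy S HS Hq. rewrite RtoC_mult. apply HS; [apply Hx | apply Hy]; assumption. Qed.

Lemma Fsqrt_real_inv x : Fsqrt_real x -> x <> 0 -> Fsqrt_real (/ x).
Proof.
  intros Hx H0 S HS Hq. rewrite (RtoC_inv x H0).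
  apply HS; [apply Hx; assumption | intro E; apply H0, RtoC_inj, E].
Qed.

Lemma Fsqrt_real_sqrt1x2 x : Fsqrt_real x -> Fsqrt_real (sqrt (1 + x * x)).
Proof. intros Hx S HS Hq. apply subfieldC_sqrt1x2_real, Hx; assumption. Qed.

Lemma Fsqrt_real_sub x y : Fsqrt_real x -> Fsqrt_real y -> Fsqrt_real (x - y).
Proof. intros. apply Fsqrt_real_add, Fsqrt_real_opp; assumption. Qed.

Lemma Fsqrt_real_div x y : Fsqrt_real x -> Fsqrt_real y -> y <> 0 -> Fsqrt_real (x / y).
Proof. intros. apply Fsqrt_real_mul, Fsqrt_real_inv; assumption. Qed.

Lemma Fsqrt_real_2 : Fsqrt_real 2.
Proof. replace 2 with (1 + 1) by ring. apply Fsqrt_real_add; apply Fsqrt_real_1. Qed.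

Lemma Fsqrt_real_pow2 x : Fsqrt_real x -> Fsqrt_real (x ^ 2).
Proof. intro. replace (x ^ 2) with (x * x) by ring. apply Fsqrt_real_mul; assumption. Qed.

Lemma Fsqrt_real_abs x : Fsqrt_real x -> Fsqrt_real (Rabs x).
Proof. intro. unfold Rabs; destruct (Rcase_abs x); [apply Fsqrt_real_opp |]; assumption. Qed.

Lemma Fsqrt_real_sqrt_sumsq x y : Fsqrt_real x -> Fsqrt_real y -> Fsqrt_real (sqrt (x * x + y * y)).
Proof.
  intros Hx Hy. destruct (Req_dec x 0) as [-> | Hx0].
  - replace (0 * 0 + y * y) with (Rsqr y) by (unfold Rsqr; ring).
    rewrite sqrt_Rsqr_abs. apply Fsqrt_real_abs, Hy.
  - replace (x * x + y * y) with (Rsqr x * (1 + y / x * (y / x))) by (unfold Rsqr; field; exact Hx0).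
    rewrite sqrt_mult_alt, sqrt_Rsqr_abs by apply Rle_0_sqr.
    apply Fsqrt_real_mul; [apply Fsqrt_real_abs, Hx |].
    apply Fsqrt_real_sqrt1x2, Fsqrt_real_div; assumption.
Qed.

Create HintDb fsqrt.
#[local] Hint Resolve Fsqrt_real_0 Fsqrt_real_1 Fsqrt_real_2 Fsqrt_real_add Fsqrt_real_sub
  Fsqrt_real_opp Fsqrt_real_mul Fsqrt_real_pow2 : fsqrt.

Definition Fsqrt_point (p : point) : Prop := Fsqrt_real (fst p) /\ Fsqrt_real (snd p).

Definition Fsqrt_line (L : point -> Prop) : Prop :=
  exists a b c, Fsqrt_real a /\ Fsqrt_real b /\ Fsqrt_real c /\ nonzero_pair a b /\ L = line_eq a b c.

Lemma in_coll_Fsqrt_line X a b c : Fsqrt_real a -> Fsqrt_real b -> Fsqrt_real c ->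
  nonzero_pair a b -> same_set (line_eq a b c) X -> in_coll Fsqrt_line X.
Proof. intros. exists (line_eq a b c). split; [exists a, b, c; auto | assumption]. Qed.

Lemma Fsqrt_point_of_meet a1 b1 c1 a2 b2 c2 p :
  Fsqrt_real a1 -> Fsqrt_real b1 -> Fsqrt_real c1 ->
  Fsqrt_real a2 -> Fsqrt_real b2 -> Fsqrt_real c2 ->
  a1 * b2 - a2 * b1 <> 0 -> line_eq a1 b1 c1 p -> line_eq a2 b2 c2 p -> Fsqrt_point p.
Proof.
  intros ? ? ? ? ? ? D H1 H2.
  (* Cramer's rule *)
  replace p with ((c1 * b2 - c2 * b1) / (a1 * b2 - a2 * b1), (a1 * c2 - a2 * c1) / (a1 * b2 - a2 * b1)).
  - split; apply Fsqrt_real_div; auto with fsqrt.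
  - unfold line_eq, affine in H1, H2.
    replace c1 with (a1 * fst p + b1 * snd p) by lra.
    replace c2 with (a2 * fst p + b2 * snd p) by lra.
    apply injective_projections; simpl; field; exact D.
Qed.

Lemma equidistant_affine_product p a1 b1 c1 a2 b2 c2 d :
  nonzero_pair a1 b1 -> nonzero_pair a2 b2 ->
  dist_to_line p (line_eq a1 b1 c1) d -> dist_to_line p (line_eq a2 b2 c2) d ->
  let r1 := sqrt (a1 * a1 + b1 * b1) in let r2 := sqrt (a2 * a2 + b2 * b2) in
  (r2 * affine a1 b1 c1 p - r1 * affine a2 b2 c2 p) *
  (r2 * affine a1 b1 c1 p + r1 * affine a2 b2 c2 p) = 0.
Proof.
  intros N1 N2 D1 D2 r1 r2.
  assert (Hr1 : 0 < r1) by apply sqrt_lt_R0, nonzero_pair_sumsq_pos, N1.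
  assert (Hr2 : 0 < r2) by apply sqrt_lt_R0, nonzero_pair_sumsq_pos, N2.
  pose proof (dist_to_line_unique _ _ _ _ D1 (dist_to_line_eq p _ _ c1 N1)) as E1.
  pose proof (dist_to_line_unique _ _ _ _ D2 (dist_to_line_eq p _ _ c2 N2)) as E2.
  fold r1 in E1; fold r2 in E2.
  assert (A1 : Rabs (affine a1 b1 c1 p) = d * r1) by (rewrite E1; field; lra).
  assert (A2 : Rabs (affine a2 b2 c2 p) = d * r2) by (rewrite E2; field; lra).
  transitivity (r2 ^ 2 * Rabs (affine a1 b1 c1 p) ^ 2 - r1 ^ 2 * Rabs (affine a2 b2 c2 p) ^ 2);
    [rewrite !pow2_abs; ring | rewrite A1, A2; ring].
Qed.

Lemma affine_product_zero u v w z : (forall t, (u + t * v) * (w + t * z) = 0) -> u <> 0 ->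
  w = 0 /\ z = 0.
Proof.
  intros H Hu. pose proof (H 0) as H0. pose proof (H 1) as H1. pose proof (H (-1)) as Hm.
  assert (Hw : w = 0) by (apply (Rmult_eq_0_cancel_l u); [exact Hu | lra]).
  subst w. split; [reflexivity |].
  apply (Rmult_eq_0_cancel_l (2 * u)); lra.
Qed.

Lemma line_eq_in_factor_zero_set al be ga A1 B1 C1 A2 B2 C2 :
  (forall q, line_eq al be ga q -> affine A1 B1 C1 q * affine A2 B2 C2 q = 0) ->
  (forall q, line_eq al be ga q -> affine A1 B1 C1 q = 0) \/
  (forall q, line_eq al be ga q -> affine A2 B2 C2 q = 0).
Proof.
  intro Hz. destruct (classic (forall q, line_eq al be ga q -> affine A1 B1 C1 q = 0)) as [H | H];
    [left; exact H | right].
  apply not_all_ex_not in H as [q1 H]. apply imply_to_and in H as [Hq1 Hf1].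
  intros q Hq.
  (* both factors are affine along the segment from q1 to q *)
  assert (Hseg : forall t,
    (affine A1 B1 C1 q1 + t * (affine A1 B1 C1 q - affine A1 B1 C1 q1)) *
    (affine A2 B2 C2 q1 + t * (affine A2 B2 C2 q - affine A2 B2 C2 q1)) = 0).
  { intro t. rewrite <- (Hz _ (line_eq_affine_comb _ _ _ _ _ t Hq1 Hq)).
    unfold affine; simpl; ring. }
  destruct (affine_product_zero _ _ _ _ Hseg Hf1). lra.
Qed.

Lemma in_coll_Fsqrt_line_of_zero_set M al be ga a1 b1 c1 a2 b2 c2 r k :
  Fsqrt_real a1 -> Fsqrt_real b1 -> Fsqrt_real c1 ->
  Fsqrt_real a2 -> Fsqrt_real b2 -> Fsqrt_real c2 ->
  Fsqrt_real r -> Fsqrt_real k -> r <> 0 -> k <> 0 ->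
  nonzero_pair al be -> same_set (line_eq al be ga) M ->
  ~ same_set (line_eq a1 b1 c1) (line_eq a2 b2 c2) ->
  (forall q, line_eq al be ga q -> affine (r * a1 - k * a2) (r * b1 - k * b2) (r * c1 - k * c2) q = 0) ->
  in_coll Fsqrt_line M.
Proof.
  intros ? ? ? ? ? ? ? ? Hr Hk Nm EM Hne Z.
  destruct (classic (nonzero_pair (r * a1 - k * a2) (r * b1 - k * b2))) as [N | N].
  - apply (in_coll_Fsqrt_line _ (r * a1 - k * a2) (r * b1 - k * b2) (r * c1 - k * c2));
      auto with fsqrt.
    eapply same_set_trans; [| exact EM].
    apply same_set_sym, line_eq_same_of_subset; [exact Nm | exact N | exact Z].
  - (* otherwise r * affine1 - k * affine2 is a constant vanishing on M, hence zero, and L1 = L2 *)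
    exfalso. apply not_or_and in N as [HA HB]. apply NNPP in HA, HB.
    destruct (line_eq_inhabited _ _ ga Nm) as [q0 Hq0].
    pose proof (Z _ Hq0) as HC. unfold affine in HC. rewrite HA, HB in HC.
    apply Hne, (line_eq_proportional _ _ _ _ _ _ r k Hr Hk).
    intro p. apply Rminus_diag_uniq. unfold affine.
    transitivity ((r * a1 - k * a2) * fst p + (r * b1 - k * b2) * snd p - (r * c1 - k * c2));
      [ring | rewrite HA, HB; lra].
Qed.

Lemma Fsqrt_line_equidistant L1 L2 M : Fsqrt_line L1 -> Fsqrt_line L2 ->
  equidistant_line L1 L2 M -> in_coll Fsqrt_line M.
Proof.
  intros (a1 & b1 & c1 & ? & ? & ? & N1 & ->) (a2 & b2 & c2 & ? & ? & ? & N2 & ->)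
         [(al & be & ga & Nm & EM) [Hne Heq]].
  assert (EM' : same_set (line_eq al be ga) M)
    by (intro p; unfold line_eq, affine; rewrite EM; lra).
  set (r1 := sqrt (a1 * a1 + b1 * b1)). set (r2 := sqrt (a2 * a2 + b2 * b2)).
  assert (Hr1 : 0 < r1) by apply sqrt_lt_R0, nonzero_pair_sumsq_pos, N1.
  assert (Hr2 : 0 < r2) by apply sqrt_lt_R0, nonzero_pair_sumsq_pos, N2.
  assert (Fr1 : Fsqrt_real r1) by (apply Fsqrt_real_sqrt_sumsq; assumption).
  assert (Fr2 : Fsqrt_real r2) by (apply Fsqrt_real_sqrt_sumsq; assumption).
  assert (Hprod : forall q, line_eq al be ga q ->
    affine (r2 * a1 - r1 * a2) (r2 * b1 - r1 * b2) (r2 * c1 - r1 * c2) q *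
    affine (r2 * a1 - - r1 * a2) (r2 * b1 - - r1 * b2) (r2 * c1 - - r1 * c2) q = 0).
  { intros q Hq. apply EM' in Hq. destruct (Heq q Hq) as [d [D1 D2]].
    rewrite <- (equidistant_affine_product q _ _ _ _ _ _ d N1 N2 D1 D2).
    unfold affine; fold r1 r2; ring. }
  destruct (line_eq_in_factor_zero_set _ _ _ _ _ _ _ _ _ Hprod) as [Z | Z];
    [apply (in_coll_Fsqrt_line_of_zero_set M al be ga a1 b1 c1 a2 b2 c2 r2 r1)
    |apply (in_coll_Fsqrt_line_of_zero_set M al be ga a1 b1 c1 a2 b2 c2 r2 (- r1))];
    auto with fsqrt; lra.
Qed.

Lemma Fsqrt_origami_pair : origami_pair Fsqrt_point Fsqrt_line.
Proof.
  split; [| split; [| split; [| split; [| split]]]].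
  - intros L (a & b & c & _ & _ & _ & N & ->). apply line_eq_is_line, N.
  - intros L1 L2 p (a1 & b1 & c1 & ? & ? & ? & N1 & ->) (a2 & b2 & c2 & ? & ? & ? & N2 & ->)
      Hnp Hp1 Hp2.
    destruct (Req_dec (a1 * b2 - a2 * b1) 0) as [D | D].
    + exfalso. apply Hnp. left. apply (line_eq_same_of_parallel _ _ _ _ _ _ p); auto. lra.
    + apply (Fsqrt_point_of_meet a1 b1 c1 a2 b2 c2); assumption.
  - intros u v [? ?] [? ?] Huv.
    eapply in_coll_Fsqrt_line; [| | | | apply same_set_sym, line_through_line_eq]; auto with fsqrt.
    destruct (point_neq_coord _ _ Huv) as [Hne | Hne]; [right | left]; intro; apply Hne; lra.
  - intros u v [? ?] [? ?] Huv.
    eapply in_coll_Fsqrt_line; [| | | | apply same_set_sym, perp_bisector_line_eq]; auto with fsqrt.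
    destruct (point_neq_coord _ _ Huv) as [Hne | Hne]; [left | right]; intro; apply Hne; lra.
  - apply Fsqrt_line_equidistant.
  - intros L1 L2 (a & b & c & ? & ? & ? & N & ->) (a' & b' & c' & ? & ? & ? & N' & ->).
    pose proof (nonzero_pair_sumsq_pos _ _ N).
    assert (Fk : Fsqrt_real (2 * (a * a' + b * b') / (a * a + b * b)))
      by (apply Fsqrt_real_div; auto with fsqrt; lra).
    eapply in_coll_Fsqrt_line;
      [| | | | apply same_set_sym, (reflect_line_line_eq _ _ a b c a' b' c'); [exact N | intro p; tauto ..]];
      [auto with fsqrt .. | apply mirror_normal_nonzero; assumption].
Qed.

Lemma F0_Fsqrt_real a : F0 a -> Fsqrt_real a.
Proof.
  intros (v1 & v2 & H1 & H2 & E).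
  assert (HP : forall v, P0 v -> Fsqrt_point v).
  { intros v Hv. apply Hv; [split | split | exists Fsqrt_line; apply Fsqrt_origami_pair];
      auto with fsqrt. }
  destruct (HP _ H1), (HP _ H2).
  assert (Fd : Fsqrt_real (pdist v1 v2)).
  { unfold pdist. rewrite <- !Rsqr_pow2. apply Fsqrt_real_sqrt_sumsq; auto with fsqrt. }
  rewrite <- E in Fd. unfold Rabs in Fd. destruct (Rcase_abs a); [| exact Fd].
  rewrite <- (Ropp_involutive a). apply Fsqrt_real_opp, Fd.
Qed.

Lemma in_coll_line_eq_scale LL a b c k : in_coll LL (line_eq a b c) -> k <> 0 ->
  in_coll LL (line_eq (k * a) (k * b) (k * c)).
Proof. intros H Hk. exact (in_coll_same_set _ _ _ H (line_eq_scale a b c k Hk)). Qed.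

Ltac line_congr H := refine (in_coll_line_eq_congr _ _ _ _ _ _ _ H _ _ _).

Section Constructions.

Variables (P : point -> Prop) (LL : (point -> Prop) -> Prop).
Hypothesis HPL : origami_pair P LL.
Hypothesis P_origin : P (0, 0).
Hypothesis P_unit : P (0, 1).

Local Notation has_line a b c := (in_coll LL (line_eq a b c)).

Lemma has_line_through u v : P u -> P v -> u <> v ->
  has_line (snd v - snd u) (- (fst v - fst u)) ((snd v - snd u) * fst u - (fst v - fst u) * snd u).
Proof.
  intros Hu Hv Huv. destruct HPL as (_ & _ & Hii & _).
  exact (in_coll_same_set _ _ _ (Hii u v Hu Hv Huv) (line_through_line_eq u v)).
Qed.

Lemma has_line_bisector u v : P u -> P v -> u <> v ->
  has_line (2 * (fst v - fst u)) (2 * (snd v - snd u)) (fst v ^ 2 + snd v ^ 2 - fst u ^ 2 - snd u ^ 2).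
Proof.
  intros Hu Hv Huv. destruct HPL as (_ & _ & _ & Hiii & _).
  exact (in_coll_same_set _ _ _ (Hiii u v Hu Hv Huv) (perp_bisector_line_eq u v)).
Qed.

Lemma P_meet a1 b1 c1 a2 b2 c2 p : has_line a1 b1 c1 -> has_line a2 b2 c2 ->
  a1 * b2 - a2 * b1 <> 0 -> line_eq a1 b1 c1 p -> line_eq a2 b2 c2 p -> P p.
Proof.
  intros [M1 [HM1 E1]] [M2 [HM2 E2]] D H1 H2. destruct HPL as (_ & Hi & _).
  apply (Hi M1 M2 p HM1 HM2); [| apply E1, H1 | apply E2, H2].
  intros [S | Disj].
  - assert (Hq : line_eq a2 b2 c2 (fst p - 1 * b1, snd p + 1 * a1))
      by apply E2, S, E1, (line_eq_translate _ _ _ _ 1 H1).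
    unfold line_eq, affine in *; simpl in *. apply D. lra.
  - apply Disj. exists p. split; [apply E1 | apply E2]; assumption.
Qed.

Lemma has_line_mirror a b c a' b' c' : nonzero_pair a b -> has_line a b c -> has_line a' b' c' ->
  has_line (a' - 2 * (a * a' + b * b') / (a * a + b * b) * a)
           (b' - 2 * (a * a' + b * b') / (a * a + b * b) * b)
           (c' - 2 * (a * a' + b * b') / (a * a + b * b) * c).
Proof.
  intros N [M1 [HM1 E1]] [M2 [HM2 E2]]. destruct HPL as (_ & _ & _ & _ & _ & Hv).
  eapply in_coll_same_set; [apply (Hv M1 M2); assumption |].
  apply reflect_line_line_eq; assumption.
Qed.

Lemma has_line_equidistant a1 b1 c1 a2 b2 c2 al be ga :
  nonzero_pair a1 b1 -> nonzero_pair a2 b2 -> nonzero_pair al be ->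
  has_line a1 b1 c1 -> has_line a2 b2 c2 -> ~ same_set (line_eq a1 b1 c1) (line_eq a2 b2 c2) ->
  (forall p, line_eq al be ga p ->
     Rabs (affine a1 b1 c1 p) / sqrt (a1 * a1 + b1 * b1) =
     Rabs (affine a2 b2 c2 p) / sqrt (a2 * a2 + b2 * b2)) ->
  has_line al be ga.
Proof.
  intros N1 N2 Nm [M1 [HM1 E1]] [M2 [HM2 E2]] Hne Heq. destruct HPL as (_ & _ & _ & _ & Hiv & _).
  apply (Hiv M1 M2 (line_eq al be ga) HM1 HM2).
  split; [apply line_eq_is_line, Nm | split].
  - intro S. apply Hne, (same_set_trans _ _ _ (same_set_sym _ _ E1)), (same_set_trans _ _ _ S), E2.
  - intros p Hp. eexists. split.
    + eapply dist_to_line_same_set; [apply dist_to_line_eq, N1 | apply same_set_sym, E1].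
    + rewrite (Heq p Hp).
      eapply dist_to_line_same_set; [apply dist_to_line_eq, N2 | apply same_set_sym, E2].
Qed.


Lemma nonzero_pair_10 : nonzero_pair 1 0.
Proof. left; lra. Qed.

Lemma nonzero_pair_01 : nonzero_pair 0 1.
Proof. right; lra. Qed.

Lemma vline_0 : has_line 1 0 0.
Proof.
  pose proof (has_line_through _ _ P_origin P_unit (pair_neq_snd 0 0 0 1 ltac:(lra))) as H.
  line_congr H; simpl; ring.
Qed.

Lemma hline_mirror c d : has_line 0 1 d -> has_line 0 1 c -> has_line 0 1 (2 * d - c).
Proof.
  intros Hd Hc. pose proof (has_line_mirror _ _ _ _ _ _ nonzero_pair_01 Hd Hc) as H.
  apply (in_coll_line_eq_scale _ _ _ _ (-1)) in H; [| lra]. line_congr H; field.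
Qed.

Lemma vline_mirror c d : has_line 1 0 d -> has_line 1 0 c -> has_line 1 0 (2 * d - c).
Proof.
  intros Hd Hc. pose proof (has_line_mirror _ _ _ _ _ _ nonzero_pair_10 Hd Hc) as H.
  apply (in_coll_line_eq_scale _ _ _ _ (-1)) in H; [| lra]. line_congr H; field.
Qed.

Lemma hline_half : has_line 0 1 (/ 2).
Proof.
  pose proof (has_line_bisector _ _ P_origin P_unit (pair_neq_snd 0 0 0 1 ltac:(lra))) as H.
  apply (in_coll_line_eq_scale _ _ _ _ (/ 2)) in H; [| lra]. line_congr H; simpl; field.
Qed.

Lemma hline_0 : has_line 0 1 0.
Proof.
  assert (Hm : P (0, / 2)).
  { apply (P_meet 1 0 0 0 1 (/ 2)); [exact vline_0 | exact hline_half | lra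
    | unfold line_eq, affine; simpl; lra ..]. }
  pose proof (has_line_bisector _ _ P_origin Hm (pair_neq_snd 0 0 0 (/ 2) ltac:(lra))) as H.
  (* reflecting y = 1/2 across y = 1/4 *)
  assert (Hq : has_line 0 1 (/ 4)) by (line_congr H; simpl; field).
  pose proof (hline_mirror _ _ Hq hline_half) as R. line_congr R; field.
Qed.

Lemma hline_1 : has_line 0 1 1.
Proof. pose proof (hline_mirror _ _ hline_half hline_0) as R. line_congr R; field. Qed.

Lemma diagonal_line : has_line 1 (-1) 0.
Proof.
  apply (has_line_equidistant 0 1 0 1 0 0); auto using nonzero_pair_01, nonzero_pair_10, hline_0, vline_0.
  - left; lra.
  - intro S. specialize (S (0, 1)). unfold line_eq, affine in S; simpl in S. lra.
  - intros p Hp. unfold line_eq, affine in *.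
    replace (0 * 0 + 1 * 1) with (1 * 1 + 0 * 0) by ring. f_equal. f_equal. lra.
Qed.

Lemma vline_of_hline c : has_line 0 1 c -> has_line 1 0 c.
Proof.
  intro Hc. pose proof (has_line_mirror 1 (-1) 0 0 1 c ltac:(left; lra) diagonal_line Hc) as H.
  line_congr H; field.
Qed.

Lemma hline_of_vline c : has_line 1 0 c -> has_line 0 1 c.
Proof.
  intro Hc. pose proof (has_line_mirror 1 (-1) 0 1 0 c ltac:(left; lra) diagonal_line Hc) as H.
  line_congr H; field.
Qed.

Lemma P_of_vline c : has_line 1 0 c -> P (c, 0).
Proof.
  intro Hc. apply (P_meet 1 0 c 0 1 0); [exact Hc | exact hline_0 | lra
    | unfold line_eq, affine; simpl; lra ..].
Qed.

Lemma vline_of_P c : P (c, 0) -> has_line 1 0 c.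
Proof.
  intro Hc. destruct (Req_dec c 0) as [-> | Hc0]; [exact vline_0 |].
  pose proof (has_line_bisector _ _ P_origin Hc (pair_neq_fst 0 c 0 0 (not_eq_sym Hc0))) as H.
  apply (in_coll_line_eq_scale _ _ _ _ (/ (2 * c))) in H; [| apply Rinv_neq_0_compat; lra].
  assert (Hh : has_line 1 0 (c / 2)) by (line_congr H; simpl; field; exact Hc0).
  pose proof (vline_mirror _ _ Hh vline_0) as R. line_congr R; field.
Qed.

Lemma vline_1 : has_line 1 0 1.
Proof. exact (vline_of_hline _ hline_1). Qed.

Lemma vline_opp a : has_line 1 0 a -> has_line 1 0 (- a).
Proof. intro Ha. pose proof (vline_mirror _ _ vline_0 Ha) as R. line_congr R; ring. Qed.

Lemma vline_add a b : has_line 1 0 a -> has_line 1 0 b -> has_line 1 0 (a + b).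
Proof.
  intros Ha Hb. destruct (Req_dec a b) as [<- | Hab].
  - pose proof (vline_mirror _ _ Ha vline_0) as R. line_congr R; ring.
  - (* x = (a + b) / 2 is the perpendicular bisector of (a, 0) and (b, 0) *)
    pose proof (has_line_bisector _ _ (P_of_vline a Ha) (P_of_vline b Hb) (pair_neq_fst a b 0 0 Hab))
      as H.
    apply (in_coll_line_eq_scale _ _ _ _ (/ (2 * (b - a)))) in H;
      [| apply Rinv_neq_0_compat; lra].
    assert (Hm : has_line 1 0 ((a + b) / 2)) by (line_congr H; simpl; field; lra).
    pose proof (vline_mirror _ _ Hm vline_0) as R. line_congr R; field.
Qed.

Lemma line_of_slope m : has_line 1 0 m -> has_line m (-1) 0.
Proof.
  intro Hm.
  assert (Q : P (1, m)).
  { apply (P_meet 1 0 1 0 1 m); [exact vline_1 | exact (hline_of_vline _ Hm) | lra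
    | unfold line_eq, affine; simpl; lra ..]. }
  pose proof (has_line_through _ _ P_origin Q (pair_neq_fst 0 1 0 m ltac:(lra))) as H.
  line_congr H; simpl; ring.
Qed.

Lemma vline_div a b : has_line 1 0 a -> has_line 1 0 b -> a <> 0 -> has_line 1 0 (b / a).
Proof.
  intros Ha Hb Ha0. destruct (Req_dec b 0) as [-> | Hb0].
  - line_congr vline_0; field; exact Ha0.
  - (* the lines y = a x and y = - a x meet y = b and y = - b above x = b / a *)
    assert (Q1 : P (b / a, b)).
    { apply (P_meet a (-1) 0 0 1 b); [exact (line_of_slope _ Ha) | exact (hline_of_vline _ Hb) | lra
      | unfold line_eq, affine; simpl; field; exact Ha0 | unfold line_eq, affine; simpl; lra]. }
    assert (Q2 : P (b / a, - b)).
    { apply (P_meet (- a) (-1) 0 0 1 (- b));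
        [exact (line_of_slope _ (vline_opp _ Ha)) | exact (hline_of_vline _ (vline_opp _ Hb)) | lra
        | unfold line_eq, affine; simpl; field; exact Ha0 | unfold line_eq, affine; simpl; lra]. }
    pose proof (has_line_through _ _ Q1 Q2 (pair_neq_snd (b / a) (b / a) b (- b) ltac:(lra))) as H.
    apply (in_coll_line_eq_scale _ _ _ _ (- / (2 * b))) in H;
      [| apply Ropp_neq_0_compat, Rinv_neq_0_compat; lra].
    line_congr H; simpl; field; tauto.
Qed.

Lemma vline_inv a : has_line 1 0 a -> a <> 0 -> has_line 1 0 (/ a).
Proof.
  intros Ha Ha0. replace (/ a) with (1 / a) by (field; exact Ha0).
  exact (vline_div _ _ Ha vline_1 Ha0).
Qed.

Lemma vline_mul a b : has_line 1 0 a -> has_line 1 0 b -> has_line 1 0 (a * b).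
Proof.
  intros Ha Hb. destruct (Req_dec a 0) as [-> | Ha0].
  - line_congr vline_0; ring.
  - pose proof (vline_div _ _ (vline_inv _ Ha Ha0) Hb (Rinv_neq_0_compat _ Ha0)) as R.
    line_congr R; field; exact Ha0.
Qed.

Lemma has_line_slope_bisector x : has_line 1 0 x -> x <> 0 ->
  has_line x (- (sqrt (1 + x * x) + 1)) 0.
Proof.
  intros Hx Hx0. set (s := sqrt (1 + x * x)).
  assert (Hs : s * s = 1 + x * x) by (apply sqrt_sqrt; nra).
  assert (Hs0 : 0 < s) by (apply sqrt_lt_R0; nra).
  apply (has_line_equidistant 0 1 0 x (-1) 0); auto using nonzero_pair_01, hline_0, line_of_slope.
  - right; lra.
  - left; exact Hx0.
  - intro S. specialize (S (1, 0)). unfold line_eq, affine in S; simpl in S. apply Hx0. lra.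
  - intros p Hp. unfold line_eq, affine in *.
    replace (0 * 0 + 1 * 1) with 1 by ring. replace (x * x + -1 * -1) with (1 + x * x) by ring.
    fold s. rewrite sqrt_1.
    replace (x * fst p + -1 * snd p - 0) with (s * snd p) by lra.
    replace (0 * fst p + 1 * snd p - 0) with (snd p) by ring.
    rewrite Rabs_mult, (Rabs_pos_eq s) by lra. field. lra.
Qed.

Lemma vline_sqrt1x2 x : has_line 1 0 x -> has_line 1 0 (sqrt (1 + x * x)).
Proof.
  intro Hx. destruct (Req_dec x 0) as [-> | Hx0].
  - replace (1 + 0 * 0) with 1 by ring. rewrite sqrt_1. exact vline_1.
  - pose proof (has_line_slope_bisector x Hx Hx0) as B. set (s := sqrt (1 + x * x)) in B |- *.
    assert (Hs0 : 0 < s) by (apply sqrt_lt_R0; nra).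
    assert (B' : has_line x (s + 1) 0).
    { pose proof (has_line_mirror _ _ _ _ _ _ nonzero_pair_01 hline_0 B) as H.
      line_congr H; field. }
    (* the bisector and its mirror image meet y = x and y = - x above x = s + 1 *)
    assert (Q1 : P (s + 1, x)).
    { apply (P_meet x (- (s + 1)) 0 0 1 x); [exact B | exact (hline_of_vline _ Hx) | lra
      | unfold line_eq, affine; simpl; ring | unfold line_eq, affine; simpl; lra]. }
    assert (Q2 : P (s + 1, - x)).
    { apply (P_meet x (s + 1) 0 0 1 (- x)); [exact B' | exact (hline_of_vline _ (vline_opp _ Hx)) | lra
      | unfold line_eq, affine; simpl; ring | unfold line_eq, affine; simpl; lra]. }
    pose proof (has_line_through _ _ Q1 Q2 (pair_neq_snd (s + 1) (s + 1) x (- x) ltac:(lra))) as H.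
    apply (in_coll_line_eq_scale _ _ _ _ (- / (2 * x))) in H;
      [| apply Ropp_neq_0_compat, Rinv_neq_0_compat; lra].
    assert (Hs1 : has_line 1 0 (s + 1)) by (line_congr H; simpl; field; exact Hx0).
    pose proof (vline_add _ _ Hs1 (vline_opp _ vline_1)) as R. line_congr R; ring.
Qed.

End Constructions.

Definition origami_abscissa (a : R) : Prop := P0 (a, 0).

Lemma origami_abscissa_closed a b c :
  (forall P LL, origami_pair P LL -> P (0, 0) -> P (0, 1) ->
     in_coll LL (line_eq 1 0 a) -> in_coll LL (line_eq 1 0 b) -> in_coll LL (line_eq 1 0 c)) ->
  origami_abscissa a -> origami_abscissa b -> origami_abscissa c.
Proof.
  intros Hc Ha Hb P H00 H01 [LL HPL].
  apply (P_of_vline P LL); try assumption.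
  apply (Hc P LL); try assumption; apply (vline_of_P P LL); try assumption;
    [apply Ha | apply Hb]; try assumption; exists LL; exact HPL.
Qed.

Definition origami_reals (z : C) : Prop := exists a, z = RtoC a /\ origami_abscissa a.

Lemma origami_reals_subfield : subfieldC origami_reals.
Proof.
  assert (O0 : origami_abscissa 0) by (intros P H00 _ _; exact H00).
  split; [| split; [| split; [| split; [| split]]]].
  - exists 0; split; [reflexivity | exact O0].
  - exists 1; split; [reflexivity |].
    apply (origami_abscissa_closed 0 0 1); [intros; eapply vline_1; eauto | exact O0 | exact O0].
  - intros x y (a & -> & Ha) (b & -> & Hb). exists (a + b). split; [symmetry; apply RtoC_plus |].
    apply (origami_abscissa_closed a b); [intros; eapply vline_add; eauto | exact Ha | exact Hb].
  - intros x (a & -> & Ha). exists (- a). split; [symmetry; apply RtoC_opp |].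
    apply (origami_abscissa_closed a a); [intros; eapply vline_opp; eauto | exact Ha | exact Ha].
  - intros x y (a & -> & Ha) (b & -> & Hb). exists (a * b). split; [symmetry; apply RtoC_mult |].
    apply (origami_abscissa_closed a b); [intros; eapply vline_mul; eauto | exact Ha | exact Hb].
  - intros x (a & -> & Ha) Hx. assert (Ha0 : a <> 0) by (intros ->; apply Hx; reflexivity).
    exists (/ a). split; [symmetry; apply RtoC_inv, Ha0 |].
    apply (origami_abscissa_closed a a); [intros; eapply vline_inv; eauto | exact Ha | exact Ha].
Qed.

Lemma origami_reals_sqrt1x2_closed : sqrt1x2_closed origami_reals.
Proof.
  intros x (a & -> & Ha). exists (RtoC (sqrt (1 + a * a))). split.
  - exists (sqrt (1 + a * a)). split; [reflexivity |].
    apply (origami_abscissa_closed a a); [intros; eapply vline_sqrt1x2; eauto | exact Ha | exact Ha].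
  - rewrite <- !RtoC_mult, <- RtoC_plus, sqrt_sqrt; [reflexivity | nra].
Qed.

Lemma origami_abscissa_F0 a : origami_abscissa a -> F0 a.
Proof.
  intro Ha. exists (0, 0), (a, 0). split; [intros P H00 _ _; exact H00 | split; [exact Ha |]].
  unfold pdist; cbn [fst snd]. replace ((0 - a) ^ 2 + (0 - 0) ^ 2) with (Rsqr a) by (unfold Rsqr; ring).
  rewrite sqrt_Rsqr_abs. reflexivity.
Qed.

Theorem mainTheorem4 :
  forall z : C, F_sqrt1x2 z <-> (exists a : R, z = RtoC a /\ F0 a).
Proof.
  intro z. split.
  - intro Hz.
    destruct (Hz origami_reals origami_reals_subfield origami_reals_sqrt1x2_closed) as (a & -> & Ha).
    exists a. split; [reflexivity | apply origami_abscissa_F0, Ha].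
  - intros (a & -> & Ha). apply F0_Fsqrt_real, Ha.
Qed.
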